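(* Let $b\ge1$ and let $A\subseteq\mathbb{N}$ be a nonempty finite set, and let $f\in\mathcal{M}^b$ be the multiset with set-array representation $(A,\emptyset,\ldots,\emptyset)$ (i.e. $f$ is the indicator function of $A$). Then \[d(f)=\sum_{B\text{ divisor of }A}b^{|B|}.\]
   Context: $\mathbb{N}=\{0,1,\ldots\}$. A set $B\subseteq\mathbb{N}$ is a divisor of $A$ if $B+C=A$ for some $C\subseteq\mathbb{N}$, where $S+T=\{s+t:s\in S,t\in T\}$. $\mathcal{M}^b$ is the set of finitely supported functions $f:\mathbb{N}\to\{0,\ldots,b\}$; its set-array representation is $(A_1,\ldots,A_b)$ with $A_i=\{a:f(a)\ge i\}$. Multiset addition is coordinatewise on set arrays, with $S+\emptyset=\emptyset$. $g\in\mathcal{M}^b$ is a divisor of $f$ if $f=g+h$ for some $h\in\mathcal{M}^b$, and $d(f)$ is the number of divisors of $f$. *)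

From HB Require Import structures.
From mathcomp Require Import all_boot.
From mathcomp Require Import finmap.
Set Implicit Arguments. Unset Strict Implicit. Unset Printing Implicit Defensive.
Local Open Scope fset_scope.

Notation mset := {fsfun nat -> nat with 0%N}.

Definition inMb (b : nat) (f : mset) : Prop := forall a : nat, f a <= b.

(* Sumset S + T = {s + t : s in S, t in T}  (so S + fset0 = fset0). *)
Definition sumset (S T : {fset nat}) : {fset nat} :=
  [fset (s + t)%N | s in S, t in T].

Definition set_divisor (B A : {fset nat}) : Prop :=
  exists C : {fset nat}, sumset B C = A.

(* i-th component A_i = {a : f a >= i} of the set-array representation. *)
Definition setarr (i : nat) (f : mset) : {fset nat} :=
  [fset a in finsupp f | i <= f a].

(* Multiset addition f = g + h, coordinatewise on set arrays (A_1,...,A_b). *)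
Definition madd_eq (b : nat) (f g h : mset) : Prop :=
  forall i, 1 <= i <= b -> setarr i f = sumset (setarr i g) (setarr i h).

Definition ms_divisor (b : nat) (g f : mset) : Prop :=
  inMb b g /\ exists h : mset, inMb b h /\ madd_eq b f g h.

From mathcomp Require Import all_boot.
From mathcomp Require Import finmap.
Set Implicit Arguments. Unset Strict Implicit. Unset Printing Implicit Defensive.
Local Open Scope fset_scope.

(* Since f is the indicator of A, its layers A_i with i >= 2 are empty, so g
   divides f exactly when the support of g divides A: for the converse take h
   the indicator of a cofactor C, and use S + {} = {} on the higher layers.
   Hence the divisors of f are the functions with values in {1, ..., b} on a
   divisor B of A, b^|B| of them for each B.  The divisors of the nonempty set
   A all lie in [0, max A], and B divides A iff the largest C with B + C inside A
   is a cofactor, so they form a computable finite set of sets. *)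

Lemma sumsetP (X Y : {fset nat}) z :
  reflect (exists x y, [/\ x \in X, y \in Y & z = (x + y)%N]) (z \in sumset X Y).
Proof.
apply: (iffP (imfset2P _ _ _ _ _)) => [[x xX [y yY ->]]|[x [y [xX yY ->]]]].
  by exists x, y.
by exists x => //; exists y.
Qed.

Lemma mem_sumset (X Y : {fset nat}) x y :
  x \in X -> y \in Y -> (x + y)%N \in sumset X Y.
Proof. by move=> xX yY; apply/sumsetP; exists x, y. Qed.

Lemma sumsets0 (X : {fset nat}) : sumset X fset0 = fset0.
Proof. by apply/fsetP => z; rewrite inE; apply/sumsetP => -[x [y [_]]]; rewrite inE. Qed.

Definition upto_max (A : {fset nat}) : {fset nat} :=
  [fset x in iota 0 (\max_(a <- A) a).+1].

Lemma mem_upto_max (A : {fset nat}) x a : a \in A -> x <= a -> x \in upto_max A.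
Proof.
move=> aA le_xa; rewrite in_fset mem_iota add0n ltnS (leq_trans le_xa) //.
by apply: (@leq_bigmax_seq _ _ xpredT (fun a : nat => a)).
Qed.

(* The cap [upto_max A] only matters when [B] is empty. *)
Definition cofactor (B A : {fset nat}) : {fset nat} :=
  [fset c in upto_max A | sumset B [fset c] `<=` A].

Lemma set_divisorP (B A : {fset nat}) :
  reflect (set_divisor B A) (sumset B (cofactor B A) == A).
Proof.
apply: (iffP eqP) => [|[C BC_A]]; first by exists (cofactor B A).
apply/eqP; rewrite eqEfsubset; apply/andP; split; apply/fsubsetP => z.
  case/sumsetP=> x [c [xB /[!inE] /andP[_ /fsubsetP BcA] ->]].
  by apply: BcA; rewrite mem_sumset ?fset11.
rewrite -{1}BC_A => /sumsetP[x [c [xB cC ->]]]; apply: mem_sumset => //.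
rewrite inE; apply/andP; split.
  by apply: (mem_upto_max (a := (x + c)%N)); rewrite ?leq_addl -?BC_A ?mem_sumset.
apply/fsubsetP => _ /sumsetP[y [_ [yB /[!inE] /eqP-> ->]]].
by rewrite -BC_A mem_sumset.
Qed.

Lemma set_divisor_sub_upto_max (B A : {fset nat}) :
  A != fset0 -> set_divisor B A -> B `<=` upto_max A.
Proof.
case/fset0Pn => a aA [C BC_A]; apply/fsubsetP => x xB.
move: aA; rewrite -BC_A => /sumsetP[_ [c [_ cC _]]].
by apply: (mem_upto_max (a := (x + c)%N)); rewrite ?leq_addr -?BC_A ?mem_sumset.
Qed.

Definition set_divisors (A : {fset nat}) : {fset {fset nat}} :=
  [fset B in fpowerset (upto_max A) | sumset B (cofactor B A) == A].

Lemma mem_set_divisors (A B : {fset nat}) :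
  A != fset0 -> B \in set_divisors A <-> set_divisor B A.
Proof.
move=> A_neq0; rewrite !inE fpowersetE.
split=> [/andP[_ /set_divisorP]//|divBA].
by rewrite set_divisor_sub_upto_max //; apply/set_divisorP.
Qed.

Definition indicator (X : {fset nat}) : mset := [fsfun x in X => 1%N].

Lemma indicatorE (X : {fset nat}) a : indicator X a = (a \in X).
Proof. by rewrite fsfunE; case: (a \in X). Qed.

Lemma finsupp_indicator (X : {fset nat}) : finsupp (indicator X) = X.
Proof. by apply/fsetP => a; rewrite mem_finsupp indicatorE; case: (a \in X). Qed.

Lemma setarr1 (g : mset) : setarr 1 g = finsupp g.
Proof. by apply/fsetP => a; rewrite !inE mem_finsupp lt0n andbb. Qed.

Lemma setarr_indicator_gt1 (X : {fset nat}) i :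
  1 < i -> setarr i (indicator X) = fset0.
Proof.
move=> i_gt1; apply/fsetP => a; rewrite !inE indicatorE.
by case: (a \in X); rewrite leqNgt ?i_gt1 ?(ltnW i_gt1) ?andbF.
Qed.

Lemma ms_divisor_indicator b (A : {fset nat}) g : 1 <= b ->
  ms_divisor b g (indicator A) <-> inMb b g /\ set_divisor (finsupp g) A.
Proof.
move=> b_gt0; split=> [[g_le [h [_ gh_A]]]|[g_le [C gC_A]]].
  split=> //; exists (setarr 1 h).
  by rewrite -setarr1 -gh_A ?leqnn ?b_gt0 // setarr1 finsupp_indicator.
split=> //; exists (indicator C); split=> [a|i /andP[i_gt0 _]].
  by rewrite indicatorE (leq_trans _ b_gt0) ?leq_b1.
case: (ltngtP i 1) => [|i_gt1|->]; first by rewrite ltnNge i_gt0.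
  by rewrite !setarr_indicator_gt1 // sumsets0.
by rewrite !setarr1 !finsupp_indicator.
Qed.

(* The label [i : 'I_b] of [x] stands for the multiplicity [i + 1]. *)
Definition mset_of_labels b (B : {fset nat}) (phi : {ffun B -> 'I_b}) : mset :=
  [fsfun x : B => (phi x).+1].

Definition labelings b (B : {fset nat}) : {fset mset} :=
  [fset mset_of_labels phi | phi : {ffun B -> 'I_b}].

Lemma mset_of_labelsE b (B : {fset nat}) (phi : {ffun B -> 'I_b}) a :
  mset_of_labels phi a = if insub a is Some x then (phi x).+1 else 0.
Proof. by rewrite /mset_of_labels fsfun_ffun; case: insub. Qed.

Lemma mset_of_labels_inj b (B : {fset nat}) : injective (@mset_of_labels b B).
Proof.
move=> phi psi /fsfunP eq_phi; apply/ffunP => x; apply/val_inj/succn_inj.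
by have := eq_phi (val x); rewrite !mset_of_labelsE valK.
Qed.

Lemma finsupp_mset_of_labels b (B : {fset nat}) (phi : {ffun B -> 'I_b}) :
  finsupp (mset_of_labels phi) = B.
Proof.
apply/fsetP => a; rewrite mem_finsupp mset_of_labelsE.
by case: insubP => [x _ <-|/negPf ->]; rewrite ?fsvalP.
Qed.

Lemma mset_of_labels_le b (B : {fset nat}) (phi : {ffun B -> 'I_b}) :
  inMb b (mset_of_labels phi).
Proof. by move=> a; rewrite mset_of_labelsE; case: insub. Qed.

Lemma card_labelings b (B : {fset nat}) : #|` labelings b B| = b ^ #|` B|.
Proof.
rewrite card_imfset; last exact: mset_of_labels_inj.
rewrite -(card_uniqP (enum_finmem_uniq _)) (eq_card (enum_finmemE _)).
by rewrite card_ffun card_ord -cardfE.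
Qed.

Lemma mem_labelings b (B : {fset nat}) g :
  g \in labelings b B <-> inMb b g /\ finsupp g = B.
Proof.
split=> [/imfsetP[phi _ ->]|[g_le suppg]].
  by split; [apply: mset_of_labels_le | apply: finsupp_mset_of_labels].
have g_gt0 (x : B) : 0 < g (val x) by rewrite lt0n -mem_finsupp suppg fsvalP.
have label_lt (x : B) : (g (val x)).-1 < b by rewrite prednK ?g_gt0.
apply/imfsetP; exists [ffun x => Ordinal (label_lt x)] => //.
apply/fsfunP => a; rewrite mset_of_labelsE.
case: insubP => [x _ <-|]; first by rewrite ffunE prednK.
by rewrite -suppg mem_finsupp negbK => /eqP.
Qed.

Definition labelings_over b (s : seq {fset nat}) : seq mset :=
  [seq g | B <- s, g <- labelings b B].

Lemma mem_labelings_over b (s : seq {fset nat}) g :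
  g \in labelings_over b s <-> inMb b g /\ finsupp g \in s.
Proof.
split=> [/allpairsPdep[B [h [Bs /mem_labelings[h_le hB] ->]]]|[g_le gs]].
  by rewrite hB.
by apply/allpairsPdep; exists (finsupp g), g; split=> //; apply/mem_labelings.
Qed.

Lemma labelings_over_uniq b (s : seq {fset nat}) :
  uniq s -> uniq (labelings_over b s).
Proof.
move=> s_uniq; apply: allpairs_uniq_dep => // t t'.
move=> /allpairsPdep[B [g [_ /mem_labelings[_ gB] ->]]].
move=> /allpairsPdep[B' [g' [_ /mem_labelings[_ gB'] ->]]] /= eq_gg'.
by rewrite -gB -gB' eq_gg'.
Qed.

Lemma size_labelings_over b (s : seq {fset nat}) :
  size (labelings_over b s) = \sum_(B <- s) b ^ #|` B|.
Proof.
rewrite size_allpairs_dep sumnE big_map.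
by apply: eq_bigr => B _; rewrite card_labelings.
Qed.

Theorem mainTheorem12 (b : nat) (A : {fset nat}) (f : mset) :
  1 <= b -> A != fset0 -> (forall a : nat, f a = (a \in A) :> nat) ->
  exists (sD : seq {fset nat}) (sM : seq mset),
    [/\ uniq sD, (forall B : {fset nat}, B \in sD <-> set_divisor B A),
        uniq sM, (forall g : mset, g \in sM <-> ms_divisor b g f)
      & size sM = \sum_(B <- sD) b ^ #|`B|].
Proof.
move=> b_gt0 A_neq0 fE.
have -> : f = indicator A by apply/fsfunP => a; rewrite fE indicatorE.
exists (set_divisors A), (labelings_over b (set_divisors A)); split.
- exact: fset_uniq.
- by move=> B; apply: mem_set_divisors.
- exact/labelings_over_uniq/fset_uniq.
- move=> g; rewrite ms_divisor_indicator // mem_labelings_over.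
  by rewrite -(mem_set_divisors _ A_neq0).
- exact: size_labelings_over.
Qed.
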